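(* There exist infinitely many circles $(x-h)^2+y^2=a^2$ with $h,a\in\mathbb{Q}$, $a>0$, for which the ratios $h/a$ are pairwise distinct, such that each of them carries four rational points $(x_i,y_i)$, $i=1,\dots,4$, with $x_{i+1}=\tfrac{5}{3}x_i$ for $i=1,2,3$, whose fourth point is $(x_4,y_4)=(h+a,0)$ and whose first point $(x_1,y_1)$ does not lie on the $x$-axis.
   Context: Rational points are points with both coordinates in $\mathbb{Q}$. *)

From mathcomp Require Import all_boot all_order all_algebra.
Set Implicit Arguments. Unset Strict Implicit. Unset Printing Implicit Defensive.
Import Order.TTheory GRing.Theory Num.Theory.
Local Open Scope ring_scope.

Definition on_circle (h a x y : rat) : Prop := (x - h) ^+ 2 + y ^+ 2 = a ^+ 2.

Definition good_circle (h a : rat) : Prop :=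
  0 < a /\
  exists x1 x2 x3 x4 y1 y2 y3 y4 : rat,
    [/\ on_circle h a x1 y1, on_circle h a x2 y2,
        on_circle h a x3 y3 & on_circle h a x4 y4] /\
    [/\ x2 = 5%:R / 3%:R * x1, x3 = 5%:R / 3%:R * x2 & x4 = 5%:R / 3%:R * x3] /\
    [/\ x4 = h + a, y4 = 0 & y1 <> 0].

From mathcomp Require Import all_boot all_order all_algebra ring lra.
Import Order.TTheory GRing.Theory Num.Theory.
Local Open Scope ring_scope.

(* The circle with centre (250/(x+80) - 1, 0) and radius 1 carries four points
   with abscissae 54, 90, 150, 250 over x + 80, and their ordinates are rational
   exactly when x - 18, x and x + 30 lie in the square classes of 98, 80 and 50.
   These three conditions cut out a curve of genus one with the rational point
   x = 20, and the degree 9 rational map x |-> Phi(x)/Psi(x)^2 preserves them.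
   Written in homogeneous integer coordinates X/Z, the iterates of 20 keep a
   numerator prime to 3 while every step multiplies the denominator by a
   multiple of 3, so they are pairwise distinct and never integers. *)

Section Polynomials.
Variable R : comNzRingType.
Implicit Types X Z : R.

Definition Psi X Z := 3*X^+4 + 48*X^+3*Z - 6*540*X^+2*Z^+2 - 540^+2*Z^+4.
Definition Phi X Z := X^+9 + 12*540*X^+7*Z^+2 + 96*540*X^+6*Z^+3
  + 30*540^+2*X^+5*Z^+4 + 576*540^+2*X^+4*Z^+5 - 48*357*540^+2*X^+3*Z^+6
  - 288*540^+3*X^+2*Z^+7 + 9*540^+4*X*Z^+8.

Definition G18 X Z := X^+4 - 72*X^+3*Z - 6*540*X^+2*Z^+2 - 120*540*X*Z^+3 + 540^+2*Z^+4.
Definition G0 X Z := X^+4 + 6*540*X^+2*Z^+2 + 48*540*X*Z^+3 - 3*540^+2*Z^+4.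
Definition Gm30 X Z := X^+4 + 120*X^+3*Z - 6*540*X^+2*Z^+2 + 72*540*X*Z^+3 + 540^+2*Z^+4.

(* The shift e = 0 is kept explicit so that all three identities have the
   shape required by shifted_square_Phi. *)
Lemma Phi_shift18 X Z : Phi X Z - 18*Z*Psi X Z^+2 = (X - 18*Z) * G18 X Z^+2.
Proof. rewrite /Phi /Psi /G18; ring. Qed.

Lemma Phi_shift0 X Z : Phi X Z - 0*Z*Psi X Z^+2 = (X - 0*Z) * G0 X Z^+2.
Proof. rewrite /Phi /Psi /G0; ring. Qed.

Lemma Phi_shiftN30 X Z : Phi X Z - (-30)*Z*Psi X Z^+2 = (X - (-30)*Z) * Gm30 X Z^+2.
Proof. rewrite /Phi /Psi /Gm30; ring. Qed.

End Polynomials.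
Arguments Psi {R}. Arguments Phi {R}.
Arguments G18 {R}. Arguments G0 {R}. Arguments Gm30 {R}.
Arguments Phi_shift18 {R}. Arguments Phi_shift0 {R}. Arguments Phi_shiftN30 {R}.

Section SquareClasses.
Variable F : fieldType.

Definition shifted_square (k e x : F) := exists s, x - e = k * s ^+ 2.

Definition triple_square (x : F) :=
  [/\ shifted_square 98 18 x, shifted_square 80 0 x & shifted_square 50 (-30) x].

Lemma shifted_square_Phi (k e X Z G : F) : Z != 0 -> Psi X Z != 0 ->
  Phi X Z - e*Z*Psi X Z^+2 = (X - e*Z) * G^+2 ->
  shifted_square k e (X / Z) -> shifted_square k e (Phi X Z / (Z * Psi X Z ^+ 2)).
Proof.
move=> Z0 Psi0 Phi_shift [s Xs]; exists (s * G / Psi X Z).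
have -> : Phi X Z / (Z * Psi X Z ^+ 2) - e = (Phi X Z - e*Z*Psi X Z^+2) / (Z * Psi X Z^+2).
  by field; rewrite Z0 Psi0.
rewrite Phi_shift (_ : X - e*Z = Z * (X / Z - e)); last by field.
by rewrite Xs; field; rewrite Z0 Psi0.
Qed.

Lemma triple_square_Phi (X Z : F) : Z != 0 -> Psi X Z != 0 ->
  triple_square (X / Z) -> triple_square (Phi X Z / (Z * Psi X Z ^+ 2)).
Proof.
move=> Z0 Psi0 [h18 h0 hN30]; split.
- exact: shifted_square_Phi Z0 Psi0 (Phi_shift18 _ _) h18.
- exact: shifted_square_Phi Z0 Psi0 (Phi_shift0 _ _) h0.
- exact: shifted_square_Phi Z0 Psi0 (Phi_shiftN30 _ _) hN30.
Qed.

End SquareClasses.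
Arguments triple_square {F}.

Lemma triple_square20 : triple_square (20 : rat).
Proof. by split; [exists (1/7) | exists (1/2) | exists 1]; field. Qed.

Lemma intr_Phi (X Z : int) : (Phi X Z)%:~R = Phi (X%:~R : rat) Z%:~R.
Proof. rewrite /Phi; ring. Qed.

Lemma intr_Psi (X Z : int) : (Psi X Z)%:~R = Psi (X%:~R : rat) Z%:~R.
Proof. rewrite /Psi; ring. Qed.

Lemma not_dvd3_powD (X A : int) (k : nat) :
  ~~ (3 %| X)%Z -> ~~ (3 %| X ^+ k.+1 + 3 * A)%Z.
Proof.
move=> X3; rewrite rpredDr; last exact/dvdz_mulr/dvdzz.
by rewrite dvdzE abszX Euclid_dvdX // -dvdzE (negbTE X3).
Qed.

Lemma dvd3_Psi (X Z : int) : (3 %| Psi X Z)%Z.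
Proof.
have -> : Psi X Z = 3 * (X^+4 + 16*X^+3*Z - 1080*X^+2*Z^+2 - 180*540*Z^+4).
  by rewrite /Psi; ring.
exact/dvdz_mulr/dvdzz.
Qed.

Lemma not_dvd3_Phi (X Z : int) : ~~ (3 %| X)%Z -> ~~ (3 %| Phi X Z)%Z.
Proof.
move=> X3; have -> : Phi X Z = X^+9 + 3 * (4*540*X^+7*Z^+2 + 32*540*X^+6*Z^+3
    + 10*540^+2*X^+5*Z^+4 + 192*540^+2*X^+4*Z^+5 - 16*357*540^+2*X^+3*Z^+6
    - 96*540^+3*X^+2*Z^+7 + 3*540^+4*X*Z^+8).
  by rewrite /Phi; ring.
exact: not_dvd3_powD.
Qed.

Lemma Psi_neq0 (X Z : int) : ~~ (3 %| X)%Z -> (3 %| Z)%Z -> Psi X Z != 0.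
Proof.
move=> X3 /dvdzP [z ->].
pose A := 16*X^+3*z - 3240*X^+2*z^+2 - 9*540^+2*z^+4.
have -> : Psi X (z * 3) = 3 * (X^+4 + 3 * A) by rewrite /A /Psi; ring.
rewrite mulf_neq0 //; apply: contraNneq (not_dvd3_powD X A 3 X3) => ->.
exact: dvdz0.
Qed.

Lemma frac_neq_dvd3 (X Z X' Z' : int) : ~~ (3 %| X)%Z -> Z != 0 -> Z' != 0 ->
  (Z' * 3 %| Z)%Z -> (X%:~R / Z%:~R : rat) != X'%:~R / Z'%:~R.
Proof.
move=> X3 Z0 Z'0 /dvdzP [W defZ].
rewrite eqr_div ?intr_eq0 // -!intrM eqr_int defZ.
apply: contra X3 => /eqP XZ'.
have -> : X = X' * W * 3 by apply: (mulIf Z'0); rewrite XZ'; ring.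
exact/dvdz_mull/dvdzz.
Qed.

Fixpoint XZ (n : nat) : int * int :=
  if n is n'.+1 then let: (X, Z) := XZ n' in (Phi X Z, Z * Psi X Z ^+ 2)
  else (20, 1).

Definition Xn n := (XZ n).1.
Definition Zn n := (XZ n).2.
Definition xr n : rat := (Xn n)%:~R / (Zn n)%:~R.

Lemma XnS n : Xn n.+1 = Phi (Xn n) (Zn n).
Proof. by rewrite /Xn /Zn /=; case: (XZ n). Qed.

Lemma ZnS n : Zn n.+1 = Zn n * Psi (Xn n) (Zn n) ^+ 2.
Proof. by rewrite /Xn /Zn /=; case: (XZ n). Qed.

Lemma not_dvd3_Xn n : ~~ (3 %| Xn n)%Z.
Proof. by elim: n => [|n IH] //; rewrite XnS not_dvd3_Phi. Qed.

Lemma Zn_dvd m n : (m <= n)%N -> (Zn m %| Zn n)%Z.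
Proof.
move=> /subnKC <-; elim: (n - m)%N => [|d IH]; first by rewrite addn0 dvdzz.
by rewrite addnS ZnS dvdz_mulr.
Qed.

Lemma Zn_dvd3 m n : (m < n)%N -> (Zn m * 3 %| Zn n)%Z.
Proof.
move=> /Zn_dvd; apply: dvdz_trans.
by rewrite ZnS dvdz_mul ?dvdzz // expr2 dvdz_mull // dvd3_Psi.
Qed.

Lemma Psi_Xn_neq0 n : Psi (Xn n) (Zn n) != 0.
Proof.
case: n => [|n]; first by apply: ltr0_neq0; rewrite [Psi _ _]/(Psi 20 1) /Psi; lra.
rewrite Psi_neq0 ?not_dvd3_Xn //.
by have := @Zn_dvd3 0 n.+1 isT; rewrite (_ : Zn 0 = 1) // mul1r.
Qed.

Lemma Zn_neq0 n : Zn n != 0.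
Proof. by elim: n => [|n IH] //; rewrite ZnS mulf_neq0 // expf_neq0 ?Psi_Xn_neq0. Qed.

Lemma xrS n : xr n.+1 =
  Phi (Xn n)%:~R (Zn n)%:~R / ((Zn n)%:~R * Psi (Xn n)%:~R (Zn n)%:~R ^+ 2).
Proof. by rewrite /xr XnS ZnS intr_Phi rmorphM rmorphXn /= intr_Psi. Qed.

Lemma triple_square_xr n : triple_square (xr n).
Proof.
elim: n => [|n IH]; first by rewrite /xr /= divr1; exact: triple_square20.
rewrite xrS; apply: triple_square_Phi IH; first by rewrite intr_eq0 Zn_neq0.
by rewrite -intr_Psi intr_eq0 Psi_Xn_neq0.
Qed.

Lemma xr_neq {m n} : (m < n)%N -> xr n != xr m.
Proof. by move=> mn; rewrite frac_neq_dvd3 ?not_dvd3_Xn ?Zn_neq0 ?Zn_dvd3. Qed.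

Lemma xr_neq_int n (k : int) : xr n.+1 != k%:~R.
Proof.
rewrite -[k%:~R]divr1 -[1]/((1 : int)%:~R).
by rewrite frac_neq_dvd3 ?not_dvd3_Xn ?Zn_neq0 // -[1 * 3]/(Zn 0 * 3) Zn_dvd3.
Qed.

Definition center (x : rat) := 250 / (x + 80) - 1.

Lemma center_inj : injective center.
Proof. by move=> x y /addIr /(mulfI (isT : (250 : rat) != 0)) /invr_inj /addIr. Qed.

Lemma on_circle_center (x e k s : rat) : x + 80 != 0 -> k = e + 80 ->
  x - e = k * s ^+ 2 -> on_circle (center x) 1 ((250 - 2*k) / (x + 80)) (2*k*s / (x + 80)).
Proof.
move=> x80 -> xs; rewrite /on_circle /center.
rewrite (_ : (2 * (e+80) * s / (x+80)) ^+ 2 = 4 * (e+80) * ((e+80) * s^+2) / (x+80)^+2).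
  by rewrite -xs; field.
by field.
Qed.

Lemma good_circle_center (x : rat) : x + 80 != 0 -> x != 18 ->
  triple_square x -> good_circle (center x) 1.
Proof.
move=> x80 x18 [[s1 xs1] [s2 xs2] [s3 xs3]]; split; first exact: ltr01.
exists ((250 - 2*98) / (x+80)), ((250 - 2*80) / (x+80)), ((250 - 2*50) / (x+80)),
  (250 / (x+80)), (2*98*s1 / (x+80)), (2*80*s2 / (x+80)), (2*50*s3 / (x+80)), 0.
split; last split; split.
- exact: on_circle_center x80 _ xs1.
- exact: on_circle_center x80 _ xs2.
- exact: on_circle_center x80 _ xs3.
- by rewrite /on_circle /center; ring.
- by field.
- by field.
- by field.
- by rewrite /center; ring.
- by [].
- move=> y0; apply: (negP x18).
  have s0 : s1 = 0.
    have -> : s1 = (x+80) / (2*98) * (2*98*s1 / (x+80)) by field.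
    by rewrite y0 mulr0.
  by rewrite -subr_eq0 xs1 s0 expr0n mulr0 eqxx.
Qed.

Theorem mainTheorem3 :
  exists c : nat -> rat * rat,
    (forall n, good_circle (c n).1 (c n).2) /\
    (forall m n, m <> n -> (c m).1 / (c m).2 <> (c n).1 / (c n).2).
Proof.
exists (fun n => (center (xr n.+1), 1)); split => [n | m n mn] /=.
  have xr80 : xr n.+1 + 80 != 0 by rewrite addr_eq0; exact: xr_neq_int n (-80).
  exact: good_circle_center xr80 (xr_neq_int n 18) (triple_square_xr _).
rewrite !divr1 => /center_inj /eqP.
case: (ltngtP m.+1 n.+1) mn => [mn _ | nm _ | [eq_mn] /(_ eq_mn) //].
- by rewrite eq_sym (negbTE (xr_neq mn)).
- by rewrite (negbTE (xr_neq nm)).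
Qed.
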